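(* Let $A\in\mathrm{GL}_{n}(\mathbb{Z})$ and let $G=\mathbb{Z}^{n}\rtimes_{A}\mathbb{Z}$, where a generator of $\mathbb{Z}$ acts on $\mathbb{Z}^{n}$ via $A$. Let $l:G\to[0,\infty)$ be a length function. Then the restriction of $l$ to $\mathbb{Z}^{n}$ extends to a continuous function $l:\mathbb{R}^{n}\to[0,\infty)$ satisfying: (1) $l(r_{1}+r_{2})\leq l(r_{1})+l(r_{2})$ for all $r_{1},r_{2}\in\mathbb{R}^{n}$; (2) $l(ar)=|a|\,l(r)$ for all $a\in\mathbb{R}$, $r\in\mathbb{R}^{n}$; (3) $l(Ar)=l(r)$ for all $r\in\mathbb{R}^{n}$.
   Context: A length function on a group $G$ is a function $l:G\to[0,\infty)$ such that $l(g^{n})=|n|\,l(g)$ for all $g\in G,n\in\mathbb{Z}$; $l(hgh^{-1})=l(g)$ for all $g,h$; and $l(ab)\leq l(a)+l(b)$ whenever $a,b$ commute. *)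

From HB Require Import structures.
From mathcomp Require Import all_boot all_order all_algebra.
From mathcomp Require Import all_classical all_reals all_analysis.
Set Implicit Arguments. Unset Strict Implicit. Unset Printing Implicit Defensive.
Import Order.TTheory GRing.Theory Num.Theory numFieldNormedType.Exports.
Local Open Scope ring_scope.

(* The semidirect product G = Z^n x|_A Z, with elements (v, k), v a column
   vector in Z^n, k in Z, and the generator 1 of Z acting on Z^n by v |-> A v:
   (v, k) * (w, m) = (v + A^k w, k + m). *)
Section SemiDirect.
Variables (n : nat) (A : 'M[int]_n).

Definition mpow (k : int) : 'M[int]_n :=
  match k with
  | Posz m => iter m (mulmx A) 1%:M
  | Negz m => iter m.+1 (mulmx (invmx A)) 1%:M
  end.

Definition sdp := ('cV[int]_n * int)%type.

Definition sdp_one : sdp := (0, 0).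
Definition sdp_mul (g h : sdp) : sdp := (g.1 + mpow g.2 *m h.1, g.2 + h.2).
Definition sdp_inv (g : sdp) : sdp := (- (mpow (- g.2) *m g.1), - g.2).

Definition sdp_expn (g : sdp) (m : nat) : sdp := iter m (sdp_mul g) sdp_one.
Definition sdp_expz (g : sdp) (z : int) : sdp :=
  match z with
  | Posz m => sdp_expn g m
  | Negz m => sdp_expn (sdp_inv g) m.+1
  end.

Definition is_length_function (R : realType) (l : sdp -> R) : Prop :=
  [/\ forall g, 0 <= l g,
      forall g (z : int), l (sdp_expz g z) = `|z|%:~R * l g,
      forall g h, l (sdp_mul (sdp_mul h g) (sdp_inv h)) = l g &
      forall a b, sdp_mul a b = sdp_mul b a -> l (sdp_mul a b) <= l a + l b].

End SemiDirect.

From HB Require Import structures.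
From mathcomp Require Import all_boot all_order all_algebra.
From mathcomp Require Import all_classical all_reals all_analysis.
From mathcomp Require Import lra.
Import Order.TTheory GRing.Theory Num.Theory numFieldNormedType.Exports.
Set Implicit Arguments. Unset Strict Implicit. Unset Printing Implicit Defensive.
Local Open Scope ring_scope.

(* On the fiber Z^n the length function is a seminorm f: integer powers give
   f(zv) = |z| f(v), commuting elements give subadditivity, and conjugating by
   the generator of Z gives f(Av) = f(v).  Extend f to R^n by
     L(r) = inf { sum |a_i| f(v_i) : r = sum a_i v_i, a_i real, v_i integral }.
   Subadditivity, homogeneity and invariance under any f-preserving integral
   matrix are immediate from this formula, and L(r) <= sum_j |r_j| f(e_j) makes
   L Lipschitz.  The real content is that L = f on Z^n: if v = sum a_i v_i,
   then Nv is the integral combination sum floor(N a_i) v_i plus an error whose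
   coordinates stay bounded independently of N, so
   N f(v) <= N sum |a_i| f(v_i) + O(1) for every N. *)

Lemma le_of_natmulD_le (R : archiRealFieldType) (x y c : R) :
  (forall N : nat, N%:R * x <= N%:R * y + c) -> x <= y.
Proof.
move=> le_xyc; rewrite leNgt; apply/negP => lt_yx.
have c_ge0 : 0 <= c by have := le_xyc 0%N; rewrite !mul0r add0r.
have xy_gt0 : 0 < x - y by rewrite subr_gt0.
have := archi_boundP (divr_ge0 c_ge0 (ltW xy_gt0)).
rewrite ltr_pdivrMr // => lt_cN.
have := le_xyc (Num.bound (c / (x - y))); rewrite mulrBr in lt_cN; lra.
Qed.

Lemma continuous_of_lipschitz_bound (R : realFieldType) (V : normedModType R)
    (L : V -> R) (k : R) :
  (forall x y, `|L x - L y| <= k * `|x - y|) -> continuous L.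
Proof.
move=> L_lip x; apply/cvgrPdist_lt => e e_gt0.
have k1_gt0 : 0 < `|k| + 1 by rewrite ltr_wpDl.
apply/nbhs_normP; exists (e / (`|k| + 1)); first by rewrite /= divr_gt0.
move=> y /=; rewrite ltr_pdivlMr // => xy_lt.
apply: le_lt_trans (L_lip x y) _; apply: le_lt_trans xy_lt.
rewrite mulrC ler_wpM2l //; apply: le_trans (ler_norm k) _; lra.
Qed.

Lemma mx_norm_entry_le (K : realDomainType) m n (M : 'M[K]_(m, n)) i j :
  `|M i j| <= `|M|.
Proof. by rewrite [leRHS]mx_normrE (le_bigmax _ (fun ij => `|M ij.1 ij.2|) (i, j)). Qed.

Lemma norm_floor_le (R : archiRealFieldType) (x : R) :
  `|(Num.floor x)%:~R| <= `|x| + 1.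
Proof.
have := floor_le x; have := floorD1_gt x; rewrite intrD.
have /andP[] : - `|x| <= x <= `|x| by rewrite -ler_norml.
by move=> *; rewrite ler_norml; apply/andP; split; lra.
Qed.

Lemma norm_sub_floor_le1 (R : archiRealFieldType) (x : R) :
  `|x - (Num.floor x)%:~R| <= 1.
Proof.
have := floor_le x; have := floorD1_gt x; rewrite intrD.
by move=> *; rewrite ler_norml; apply/andP; split; lra.
Qed.

Local Notation intmx M := (map_mx (fun z : int => z%:~R) M).

Section HomogeneousExtension.
Variables (R : realType) (n : nat) (f : 'cV[int]_n -> R).
Hypothesis f_mulz : forall v (z : int), f (v *~ z) = `|z|%:~R * f v.
Hypothesis f_subadd : forall v w, f (v + w) <= f v + f w.

Lemma f0 : f 0 = 0.
Proof. by rewrite -(mulr0z (0 : 'cV[int]_n)) f_mulz mul0r. Qed.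

Lemma fZ (z : int) v : f (z *: v) = `|z|%:~R * f v.
Proof. by rewrite -f_mulz -scaler_int intz. Qed.

Lemma f_ge0 v : 0 <= f v.
Proof.
have fN : f (- v) = f v by rewrite -scaleN1r fZ normrN1 mul1r.
have := f_subadd v (- v); rewrite subrr f0 fN; lra.
Qed.

Lemma f_sum_le (I : Type) (s : seq I) (F : I -> 'cV[int]_n) :
  f (\sum_(i <- s) F i) <= \sum_(i <- s) f (F i).
Proof.
elim: s => [|a s IH]; first by rewrite !big_nil f0.
by rewrite !big_cons; apply: le_trans (f_subadd _ _) _; apply: lerD.
Qed.

Lemma f_le_coord v : f v <= \sum_j `|v j 0|%:~R * f (delta_mx j 0).
Proof.
rewrite {1}(matrix_sum_delta v); apply: le_trans (f_sum_le _ _) _.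
by apply: ler_sum => j _; rewrite big_ord1 fZ !ord1.
Qed.

Definition round_comb (N : nat) (s : seq (R * 'cV[int]_n)) : 'cV[int]_n :=
  \sum_(p <- s) Num.floor (N%:R * p.1) *: p.2.

Lemma f_round_comb_le N s :
  f (round_comb N s) <= \sum_(p <- s) (N%:R * `|p.1| + 1) * f p.2.
Proof.
apply: le_trans (f_sum_le _ _) _; apply: ler_sum => p _.
rewrite fZ ler_wpM2r ?f_ge0 // intr_norm.
by apply: le_trans (norm_floor_le _) _; rewrite normrM normr_nat.
Qed.

Lemma f_round_error_le N s v :
  intmx v = \sum_(p <- s) p.1 *: intmx p.2 ->
  f (v *+ N - round_comb N s) <=
    \sum_j (\sum_(p <- s) `|p.2 j 0|%:~R) * f (delta_mx j 0).
Proof.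
move=> v_comb; apply: le_trans (f_le_coord _) _; apply: ler_sum => j _.
rewrite ler_wpM2r ?f_ge0 // intr_norm.
have vj : (v j 0)%:~R = \sum_(p <- s) p.1 * (p.2 j 0)%:~R :> R.
  have := congr1 (fun M : 'cV[R]_n => M j 0) v_comb.
  by rewrite mxE summxE => ->; apply: eq_bigr => p _; rewrite !mxE.
have -> : ((v *+ N - round_comb N s) j 0)%:~R =
    \sum_(p <- s) (N%:R * p.1 - (Num.floor (N%:R * p.1))%:~R) * (p.2 j 0)%:~R :> R.
  rewrite /round_comb !mxE summxE rmorphB /= mulmxnE rmorphMn /= vj rmorph_sum /=.
  rewrite -sumrMnl -sumrB; apply: eq_bigr => p _.
  by rewrite !mxE rmorphM /= mulrBl mulr_natl mulrnAl.
apply: le_trans (ler_norm_sum _ _ _) _; apply: ler_sum => p _.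
by rewrite normrM intr_norm ler_piMl // norm_sub_floor_le1.
Qed.

Lemma f_le_real_comb v s :
  intmx v = \sum_(p <- s) p.1 *: intmx p.2 ->
  f v <= \sum_(p <- s) `|p.1| * f p.2.
Proof.
move=> v_comb.
set c := \sum_(p <- s) f p.2 +
  \sum_j (\sum_(p <- s) `|p.2 j 0|%:~R) * f (delta_mx j 0).
apply: (le_of_natmulD_le (c := c)) => N.
have -> : N%:R * f v = f (round_comb N s + (v *+ N - round_comb N s)).
  by rewrite addrC subrK -(mulrz_nat N v) f_mulz normr_nat mulrz_nat.
apply: le_trans (f_subadd _ _) _; rewrite /c addrA mulr_sumr -big_split /=.
apply: lerD; last exact: f_round_error_le.
by apply: le_trans (f_round_comb_le _ _) _; apply: ler_sum => p _; rewrite mulrA mulrDl mul1r.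
Qed.

Definition decomp_cost (r : 'cV[R]_n) : set R :=
  [set x | exists s : seq (R * 'cV[int]_n),
     r = \sum_(p <- s) p.1 *: intmx p.2 /\ x = \sum_(p <- s) `|p.1| * f p.2].

Definition hom_ext (r : 'cV[R]_n) : R := inf (decomp_cost r).

Lemma decomp_cost_ge0 r x : decomp_cost r x -> 0 <= x.
Proof.
by case=> s [_ ->]; apply: sumr_ge0 => p _; rewrite mulr_ge0 ?f_ge0.
Qed.

Lemma decomp_cost_coord r :
  decomp_cost r (\sum_j `|r j 0| * f (delta_mx j 0)).
Proof.
exists [seq (r j 0, delta_mx j 0) | j <- index_enum 'I_n].
rewrite !big_map; split => //.
rewrite {1}(matrix_sum_delta r); apply: eq_bigr => j _.
by rewrite big_ord1 (map_delta_mx (intr : int -> R)) !ord1.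
Qed.

Lemma decomp_costD r1 r2 x1 x2 :
  decomp_cost r1 x1 -> decomp_cost r2 x2 -> decomp_cost (r1 + r2) (x1 + x2).
Proof. by case=> s1 [-> ->] [s2 [-> ->]]; exists (s1 ++ s2); rewrite !big_cat. Qed.

Lemma decomp_costZ a r x :
  decomp_cost r x -> decomp_cost (a *: r) (`|a| * x).
Proof.
case=> s [-> ->]; exists [seq (a * p.1, p.2) | p <- s].
rewrite !big_map scaler_sumr mulr_sumr; split; apply: eq_bigr => p _ /=.
  by rewrite scalerA.
by rewrite normrM mulrA.
Qed.

Lemma decomp_costM (M : 'M[int]_n) r x :
  (forall v, f (M *m v) <= f v) ->
  decomp_cost r x -> exists2 y, decomp_cost (intmx M *m r) y & y <= x.
Proof.
move=> fM [s [-> ->]]; exists (\sum_(p <- s) `|p.1| * f (M *m p.2)).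
  exists [seq (p.1, M *m p.2) | p <- s].
  rewrite !big_map mulmx_sumr; split => //; apply: eq_bigr => p _ /=.
  by rewrite (map_mxM (intr : int -> R)) scalemxAr.
by apply: ler_sum => p _; rewrite ler_wpM2l.
Qed.

Lemma hom_ext_le r x : decomp_cost r x -> hom_ext r <= x.
Proof. by apply: ge_inf; exists 0 => y /decomp_cost_ge0. Qed.

Lemma hom_ext_ge_lb r y : (forall x, decomp_cost r x -> y <= x) -> y <= hom_ext r.
Proof. by apply: lb_le_inf; exists (\sum_j `|r j 0| * f (delta_mx j 0)); apply: decomp_cost_coord. Qed.

Lemma hom_ext_ge0 r : 0 <= hom_ext r.
Proof. by apply: hom_ext_ge_lb => x /decomp_cost_ge0. Qed.

Lemma hom_ext_le_coord r : hom_ext r <= \sum_j `|r j 0| * f (delta_mx j 0).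
Proof. exact/hom_ext_le/decomp_cost_coord. Qed.

Lemma hom_ext_intmx v : hom_ext (intmx v) = f v.
Proof.
apply/eqP; rewrite eq_le; apply/andP; split.
  apply: hom_ext_le; exists [:: (1, v)].
  by rewrite !big_seq1 scale1r normr1 mul1r.
by apply: hom_ext_ge_lb => x [s [v_comb ->]]; apply: f_le_real_comb.
Qed.

Lemma ler_hom_extD r1 r2 : hom_ext (r1 + r2) <= hom_ext r1 + hom_ext r2.
Proof.
rewrite -lerBlDl; apply: hom_ext_ge_lb => x2 cost2.
rewrite lerBlDr -lerBlDl; apply: hom_ext_ge_lb => x1 cost1.
by rewrite lerBlDl addrC; apply/hom_ext_le/decomp_costD.
Qed.

Lemma hom_extZ a r : hom_ext (a *: r) = `|a| * hom_ext r.
Proof.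
have hom_extZ_le b s : hom_ext (b *: s) <= `|b| * hom_ext s.
  have [->|b_neq0] := eqVneq b 0.
    by rewrite scale0r normr0 mul0r; apply: hom_ext_le; exists [::]; rewrite !big_nil.
  rewrite mulrC -ler_pdivrMr ?normr_gt0 //; apply: hom_ext_ge_lb => x cost.
  by rewrite ler_pdivrMr ?normr_gt0 // mulrC; apply/hom_ext_le/decomp_costZ.
apply/eqP; rewrite eq_le hom_extZ_le /=.
have [->|a_neq0] := eqVneq a 0; first by rewrite normr0 mul0r hom_ext_ge0.
have := ler_wpM2l (normr_ge0 a) (hom_extZ_le a^-1 (a *: r)).
by rewrite scalerA mulVf // scale1r normfV mulrA mulfV ?normr_eq0 // mul1r.
Qed.

Lemma hom_extM_le (M : 'M[int]_n) r :
  (forall v, f (M *m v) <= f v) -> hom_ext (intmx M *m r) <= hom_ext r.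
Proof.
move=> fM; apply: hom_ext_ge_lb => x /(decomp_costM fM) [y cost_y le_yx].
exact: le_trans (hom_ext_le cost_y) le_yx.
Qed.

Lemma hom_extM (M : 'M[int]_n) r :
  M \in unitmx -> (forall v, f (M *m v) = f v) -> hom_ext (intmx M *m r) = hom_ext r.
Proof.
move=> M_unit fM; apply/eqP; rewrite eq_le hom_extM_le => [/=|v]; last by rewrite fM.
have fMV v : f (invmx M *m v) <= f v by rewrite -fM mulmxA mulmxV ?mul1mx.
apply: le_trans (hom_extM_le (intmx M *m r) fMV).
by rewrite mulmxA -(map_mxM (intr : int -> R)) mulVmx // (map_mx1 (intr : int -> R)) mul1mx.
Qed.

Lemma hom_ext_lipschitz x y :
  `|hom_ext x - hom_ext y| <= (\sum_j f (delta_mx j 0)) * `|x - y|.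
Proof.
have hom_extB_le r s : hom_ext r - hom_ext s <= hom_ext (r - s).
  by rewrite lerBlDl; apply: le_trans (ler_hom_extD _ _); rewrite addrC subrK.
have hom_extN r : hom_ext (- r) = hom_ext r.
  by rewrite -scaleN1r hom_extZ normrN1 mul1r.
apply: le_trans (_ : hom_ext (x - y) <= _).
  rewrite ler_norml hom_extB_le andbT lerNl opprB -[hom_ext (x - y)]hom_extN opprB.
  exact: hom_extB_le.
apply: le_trans (hom_ext_le_coord _) _; rewrite mulr_suml; apply: ler_sum => j _.
by rewrite mulrC ler_wpM2l ?f_ge0 ?mx_norm_entry_le.
Qed.

Lemma hom_ext_continuous : continuous hom_ext.
Proof. exact: continuous_of_lipschitz_bound hom_ext_lipschitz. Qed.

End HomogeneousExtension.

Section LengthOnFiber.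
Variables (n : nat) (A : 'M[int]_n).

Lemma sdp_mul_vec (v w : 'cV[int]_n) : sdp_mul A (v, 0) (w, 0) = (v + w, 0).
Proof. by rewrite /sdp_mul /= mul1mx addr0. Qed.

Lemma sdp_expz_vec (v : 'cV[int]_n) (z : int) : sdp_expz A (v, 0) z = (v *~ z, 0).
Proof.
have expn_vec w m : sdp_expn A (w, 0) m = (w *+ m, 0).
  by elim: m => [|m IH] /=; rewrite ?mulr0n // IH sdp_mul_vec mulrS.
case: z => m; first exact: expn_vec.
rewrite /sdp_expz.
have -> : sdp_inv A (v, 0) = (- v, 0) by rewrite /sdp_inv /= oppr0 mul1mx.
by rewrite expn_vec NegzE mulrNz -pmulrn mulNrn.
Qed.

Lemma sdp_conj_generator (v : 'cV[int]_n) :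
  sdp_mul A (sdp_mul A (0, 1) (v, 0)) (sdp_inv A (0, 1)) = (A *m v, 0).
Proof.
by rewrite /sdp_mul /sdp_inv /= mulmx0 addr0 subrr mulmx1 oppr0 mulmx0 add0r addr0.
Qed.

End LengthOnFiber.

Theorem lemma6 (R : realType) (n : nat) (A : 'M[int]_n) (l : sdp n -> R) :
  A \in unitmx ->
  is_length_function A l ->
  exists L : 'cV[R]_n -> R,
    [/\ continuous L, forall r, 0 <= L r,
        forall v : 'cV[int]_n, L (map_mx (fun z : int => z%:~R) v) = l (v, 0) &
      [/\
        forall r1 r2, L (r1 + r2) <= L r1 + L r2,
        forall (a : R) r, L (a *: r) = `|a| * L r &
        forall r, L (map_mx (fun z : int => z%:~R) A *m r) = L r]].
Proof.
move=> A_unit [_ l_expz l_conj l_commD].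
pose f v := l (v, 0).
have f_mulz v z : f (v *~ z) = `|z|%:~R * f v by rewrite /f -(sdp_expz_vec A) l_expz.
have f_subadd v w : f (v + w) <= f v + f w.
  by rewrite /f -(sdp_mul_vec A); apply: l_commD; rewrite !sdp_mul_vec addrC.
have fA v : f (A *m v) = f v by rewrite /f -sdp_conj_generator l_conj.
exists (hom_ext f); split.
- exact: hom_ext_continuous.
- exact: hom_ext_ge0.
- exact: hom_ext_intmx.
split.
- exact: ler_hom_extD.
- exact: hom_extZ.
- by move=> r; apply: hom_extM.
Qed.
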